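(* Let $G=(V,E)$ be a task-assistance graph and let $\pi=\langle v_0,\dots,v_k\rangle$ ($k\ge 1$) be a path in $G$ that admits at least one timing profile. Then there exists an optimal timing profile $\mathcal{T}=\langle t_0,\dots,t_{k-1}\rangle$ for $\pi$ such that $t_i\in C_i$ for every $i\in\{0,\dots,k-1\}$.
   Context: A task-assistance graph is a directed graph $G=(V,E)$ in which every edge $e$ has a length $\ell(e)\ge 0$ and every vertex $v$ has a finite set $\mathcal{I}(v)$ of closed intervals contained in $[0,1]$. A path is $\pi=\langle v_0,\dots,v_k\rangle$ with $(v_i,v_{i+1})\in E$; vertices may repeat, and all quantities below are attached to positions $i$ in the path. Set $\ell(v_{-1},v_0):=0$, $\ell(v_k,v_{k+1}):=0$, $\ell(v_i):=\sum_{j=0}^{i-1}\ell(v_j,v_{j+1})$, $\ell^+(v_i):=\ell(v_i)+\tfrac12\ell(v_i,v_{i+1})$, $\ell^-(v_i):=\ell(v_i)-\tfrac12\ell(v_{i-1},v_i)$, and $\ell^+(v_i,v_j):=\ell^+(v_j)-\ell^+(v_i)$ (for any positions $i,j$). A timing profile of $\pi$ is a sequence of reals $\langle t_0,\dots,t_{k-1}\rangle$ with $t_0\ge \ell^+(v_0)$, $t_{i+1}\ge t_i+\ell^+(v_i,v_{i+1})$ for $0\le i\le k-2$, and $t_{k-1}+\ell^+(v_{k-1},v_k)\le 1$. For a vertex $u$ and $0\le t\le t'\le 1$, $R(u,t,t'):=\sum_{I\in\mathcal{I}(u)}|[t,t']\cap I|$ (length of intersection). With $t_{-1}:=0$, $t_k:=1$,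 the reward of a timing profile is $R(\pi,\mathcal{T}):=\sum_{i=0}^{k}R(v_i,t_{i-1},t_i)$; a timing profile is optimal if it maximizes this reward over all timing profiles of $\pi$. Critical times: define augmented interval sets per position, $J_i:=\mathcal{I}(v_i)$ for $0<i<k$, $J_0:=\mathcal{I}(v_0)\cup\{[\ell^+(v_0),\ell^+(v_0)]\}$, $J_k:=\mathcal{I}(v_k)\cup\{[1-\ell^+(v_{k-1},v_k),\,1-\ell^+(v_{k-1},v_k)]\}$. For positions $0\le a<b\le k$ let $C(a,b):=\{t_e:[t_s,t_e]\in J_a\}\cup\{t_s-(\ell^-(v_b)-\ell^+(v_a)):[t_s,t_e]\in J_b\}$. For each position $i$, $C_i:=\bigcup_{0\le a<b\le k}\{\tau+\ell^+(v_a,v_i):\tau\in C(a,b)\}$. *)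

From HB Require Import structures.
From mathcomp Require Import all_boot all_order all_algebra.
From mathcomp Require Import reals.
Set Implicit Arguments. Unset Strict Implicit. Unset Printing Implicit Defensive.
Import Order.TTheory GRing.Theory Num.Theory.
Local Open Scope ring_scope.

(* A path pi = <v_0,...,v_k> is given by k and v : nat -> V (only v 0..v k matter).
   len u w = edge length l(u,w); intervals are pairs (s,e) meaning [s,e]. *)
Section TA.
Variables (R : realType) (V : Type) (len : V -> V -> R) (k : nat) (v : nat -> V).

(* length of edge leaving position i: l(v_i,v_{i+1}), with l(v_k,v_{k+1}) := 0 *)
Definition eout (i : nat) : R := if (i < k)%N then len (v i) (v i.+1) else 0.
(* length of edge entering position i: l(v_{i-1},v_i), with l(v_{-1},v_0) := 0 *)
Definition ein (i : nat) : R := if i is j.+1 then eout j else 0.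
Definition lpos (i : nat) : R := \sum_(j < i) eout j.
Definition lplus (i : nat) : R := lpos i + eout i / 2.
Definition lminus (i : nat) : R := lpos i - ein i / 2.
Definition lplus2 (i j : nat) : R := lplus j - lplus i.

(* t : nat -> R represents <t_0,...,t_{k-1}> (values at i >= k are irrelevant) *)
Definition is_timing_profile (t : nat -> R) : Prop :=
  [/\ lplus 0 <= t 0%N,
      (forall i : nat, (i.+2 <= k)%N -> t i + lplus2 i i.+1 <= t i.+1)
    & t k.-1 + lplus2 k.-1 k <= 1].

Definition ilen (t t' : R) (I : R * R) : R :=
  Num.max 0 (Num.min t' I.2 - Num.max t I.1).

Definition Rew (Iv : V -> seq (R * R)) (u : V) (t t' : R) : R :=
  \sum_(I <- Iv u) ilen t t' I.

(* extended profile: t_{-1} := 0, t_k := 1 *)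
Definition tbefore (t : nat -> R) (i : nat) : R := if i is j.+1 then t j else 0.
Definition tat (t : nat -> R) (i : nat) : R := if (i < k)%N then t i else 1.

Definition reward (Iv : V -> seq (R * R)) (t : nat -> R) : R :=
  \sum_(i < k.+1) Rew Iv (v i) (tbefore t i) (tat t i).

Definition optimal_profile (Iv : V -> seq (R * R)) (t : nat -> R) : Prop :=
  is_timing_profile t /\
  forall t' : nat -> R, is_timing_profile t' -> reward Iv t' <= reward Iv t.

Definition Jset (Iv : V -> seq (R * R)) (i : nat) : seq (R * R) :=
  if i == 0%N then Iv (v 0%N) ++ [:: (lplus 0, lplus 0)]
  else if i == k then Iv (v k) ++ [:: (1 - lplus2 k.-1 k, 1 - lplus2 k.-1 k)]
  else Iv (v i).

Definition inC2 (Iv : V -> seq (R * R)) (a b : nat) (tau : R) : Prop :=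
  (exists ts te : R, (ts, te) \in Jset Iv a /\ tau = te) \/
  (exists ts te : R, (ts, te) \in Jset Iv b /\ tau = ts - (lminus b - lplus a)).

Definition inCi (Iv : V -> seq (R * R)) (i : nat) (x : R) : Prop :=
  exists a b : nat, [/\ (a < b)%N, (b <= k)%N &
    exists tau : R, inC2 Iv a b tau /\ x = tau + lplus2 a i].

End TA.

(* Write a timing profile as t_i = l^+(v_i) + d_i: the constraints become
   0 <= d_0 <= ... <= d_(k-1) <= 1 - l^+(v_k).  The reward is a sum of terms
   max(0, min(t_i, e) - max(t_(i-1), s)), piecewise affine in the delays with
   breakpoints in a finite set [grid], and every delay in [grid] yields a
   critical time.  If some delay value c is off the grid, let a < c < b be the
   nearest grid points or delay values around c.  Moving all delays equal to c
   jointly to x in [a, b] keeps the profile feasible, and the reward is convex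
   in x there, so moving them to a or to b does not decrease it, while it
   lowers the number of distinct off-grid delays.  Hence every profile is
   dominated by a grid profile, and the best of the finitely many feasible
   grid profiles is optimal. *)

From HB Require Import structures.
From mathcomp Require Import all_boot all_order all_algebra.
From mathcomp Require Import reals boolp.
From mathcomp Require Import ring lra zify.
Import Order.TTheory GRing.Theory Num.Theory.
Local Open Scope ring_scope.

Set Implicit Arguments.
Unset Strict Implicit.

Lemma exists_gap_around disp (T : orderType disp) (s : seq T) (lo c hi : T) :
  lo \in s -> hi \in s -> (lo < c < hi)%O ->
  exists a b, [/\ a \in s, b \in s, (a < c < b)%O &
    forall y, y \in s -> y != c -> (y <= a)%O \/ (b <= y)%O].
Proof.
move=> los his /andP[loc chi].
have [a a_lt a_max] := arg_maxP (fun y : seq_sub s => val y)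
  (loc : (fun y : seq_sub s => (val y < c)%O) (SeqSub los)).
have [b b_gt b_min] := arg_minP (fun y : seq_sub s => val y)
  (chi : (fun y : seq_sub s => (c < val y)%O) (SeqSub his)).
exists (val a), (val b); split; rewrite ?ssvalP ?a_lt ?b_gt //.
move=> y ys yc; case: (ltgtP y c) yc => // [ylt|ygt] _.
- by left; apply: (a_max (SeqSub ys)).
- by right; apply: (b_min (SeqSub ys)).
Qed.

Section ChordConvexity.
Variables (R : realFieldType) (a b : R).

Definition affine_on (f : R -> R) : Prop :=
  exists alpha beta : R, forall x, a <= x <= b -> f x = alpha * x + beta.

Definition below_chord (f : R -> R) : Prop :=
  forall c, a <= c <= b -> (b - a) * f c <= (b - c) * f a + (c - a) * f b.

Definition one_sided (f : R -> R) (s : R) : Prop :=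
  (forall x, a <= x <= b -> s <= f x) \/ (forall x, a <= x <= b -> f x <= s).

Lemma affine_on_cst K : affine_on (fun=> K).
Proof. by exists 0, K => x _; rewrite mul0r add0r. Qed.

Lemma affine_on_shift (m : bool) K L : affine_on (fun x => (if m then x else K) + L).
Proof.
case: m; last exact: affine_on_cst.
by exists 1, L => x _; rewrite mul1r.
Qed.

Lemma affine_on_sub f g : affine_on f -> affine_on g -> affine_on (fun x => f x - g x).
Proof.
move=> [al [be fE]] [al' [be' gE]]; exists (al - al'), (be - be') => x xab.
by rewrite fE // gE //; ring.
Qed.

Lemma affine_on_max f s : affine_on f -> one_sided f s ->
  affine_on (fun x => Num.max (f x) s).
Proof.
move=> [al [be fE]] [above|below].
  by exists al, be => x xab; rewrite max_l; [exact: fE | exact: above].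
by exists 0, s => x xab; rewrite max_r ?mul0r ?add0r //; exact: below.
Qed.

Lemma affine_on_min f e : affine_on f -> one_sided f e ->
  affine_on (fun x => Num.min (f x) e).
Proof.
move=> [al [be fE]] [above|below].
  by exists 0, e => x xab; rewrite min_r ?mul0r ?add0r //; exact: above.
by exists al, be => x xab; rewrite min_l; [exact: fE | exact: below].
Qed.

Lemma one_sided_cst K s : one_sided (fun=> K) s.
Proof. by case: (leP s K) => sK; [left | right => x _; apply: ltW]. Qed.

Lemma one_sided_shift (m : bool) K L s : (m -> s - L <= a \/ b <= s - L) ->
  one_sided (fun x => (if m then x else K) + L) s.
Proof.
case: m => [/(_ isT) [sa|bs] | _]; last exact: one_sided_cst.
  by left => x /andP[ax _]; lra.
by right => x /andP[_ xb]; lra.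
Qed.

Lemma below_chord_max0 f : affine_on f -> below_chord (fun x => Num.max 0 (f x)).
Proof.
move=> [al [be fE]] c /andP[ac cb].
have aab : a <= a <= b by rewrite lexx (le_trans ac).
have bab : a <= b <= b by rewrite lexx (le_trans ac).
rewrite !fE ?ac //; set fa := al * a + be; set fb := al * b + be.
have ba_ge0 : 0 <= b - a by lra.
rewrite maxr_pMr // mulr0 ge_max; apply/andP; split.
  by rewrite addr_ge0 // mulr_ge0 ?le_max ?lexx //; lra.
have -> : (b - a) * (al * c + be) = (b - c) * fa + (c - a) * fb by rewrite /fa /fb; ring.
by rewrite lerD // ler_wpM2l ?le_max ?lexx ?orbT //; lra.
Qed.

Lemma below_chord_sum (I : eqType) (r : seq I) (F : I -> R -> R) :
  (forall i, i \in r -> below_chord (F i)) -> below_chord (fun x => \sum_(i <- r) F i x).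
Proof.
move=> Fchord c cab; rewrite !mulr_sumr -big_split /=.
by rewrite big_seq [leRHS]big_seq; apply: ler_sum => i ir; apply: Fchord.
Qed.

Lemma below_chord_le_max f c : a < b -> a <= c <= b -> below_chord f ->
  f c <= Num.max (f a) (f b).
Proof.
move=> ab cab /(_ c cab) fc; rewrite -(ler_pM2l (_ : 0 < b - a)) ?subr_gt0 //.
apply: le_trans fc _; move: cab => /andP[ac cb].
have -> : (b - a) * Num.max (f a) (f b) =
  (b - c) * Num.max (f a) (f b) + (c - a) * Num.max (f a) (f b) by ring.
by rewrite lerD // ler_wpM2l ?le_max ?lexx ?orbT //; lra.
Qed.

End ChordConvexity.

Lemma below_chord_ilen (R : realType) (a b : R) (f g : R -> R) (iv : R * R) :
  affine_on a b f -> affine_on a b g ->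
  one_sided a b f iv.1 -> one_sided a b g iv.2 ->
  below_chord a b (fun x => ilen (f x) (g x) iv).
Proof.
move=> f_aff g_aff f_side g_side; apply: below_chord_max0.
by apply: affine_on_sub; [apply: affine_on_min | apply: affine_on_max].
Qed.

Section GridProfiles.
Variables (R : realType) (V : Type) (len : V -> V -> R) (Iv : V -> seq (R * R))
  (k : nat) (v : nat -> V).
Hypothesis k_gt0 : (0 < k)%N.

Local Notation lp := (lplus len k v).
Local Notation J := (Jset len k v Iv).

Definition delayed (d : nat -> R) : nat -> R := fun i => d i + lp i.

Definition slack : R := 1 - lp k.

Definition feasible (d : nat -> R) : Prop :=
  (forall i, (i < k)%N -> 0 <= d i <= slack) /\
  (forall i j, (i <= j < k)%N -> d i <= d j).

Lemma timing_profile_delayedP d :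
  is_timing_profile len k v (delayed d) <-> feasible d.
Proof.
rewrite /is_timing_profile /feasible /delayed /lplus2 /slack.
split=> [[d0 dS dlast] | [dbound dmono]].
  have mono : forall i j, (i <= j < k)%N -> d i <= d j.
    move=> i j /andP[+ jk]; elim: j jk => [|j IH] jk; first by rewrite leqn0 => /eqP->.
    rewrite leq_eqVlt => /orP[/eqP-> //|ij].
    by apply: le_trans (IH (ltnW jk) ij) _; have := dS j jk; lra.
  split=> // i ik; have := mono 0%N i ik.
  have /mono : (i <= k.-1 < k)%N by lia.
  lra.
split.
- by have /andP[] := dbound 0%N k_gt0; lra.
- by move=> i ik; have := dmono i i.+1; rewrite leqnSn ik => /(_ isT); lra.
- have /dbound/andP[] : (k.-1 < k)%N by rewrite ltn_predL.
  lra.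
Qed.

Lemma lminus_succ i : lminus len k v i.+1 = lp i.
Proof. by rewrite /lminus /lplus /lpos big_ord_recr /=; lra. Qed.

Lemma Iv_sub_Jset i : {subset Iv (v i) <= J i}.
Proof.
move=> iv; rewrite /Jset.
by case: eqP => [->|_]; [|case: eqP => [->|_]]; rewrite ?mem_cat => ->.
Qed.

(* The breakpoints of the reward in delay coordinates: [t_i = d i + lp i]
   meets the end of an interval of position [i] or the start of an interval of
   position [i.+1]. *)
Definition grid : seq R :=
  [seq iv.2 - lp i | i <- iota 0 k, iv <- J i] ++
  [seq iv.1 - lp i | i <- iota 0 k, iv <- J i.+1].

Lemma mem_grid_end i iv : (i < k)%N -> iv \in J i -> iv.2 - lp i \in grid.
Proof.
move=> ik ivJ; rewrite mem_cat; apply/orP; left.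
by apply: (allpairs_f_dep (fun i (iv : R * R) => iv.2 - lp i)); rewrite // mem_iota.
Qed.

Lemma mem_grid_start i iv : (i < k)%N -> iv \in J i.+1 -> iv.1 - lp i \in grid.
Proof.
move=> ik ivJ; rewrite mem_cat; apply/orP; right.
by apply: (allpairs_f_dep (fun i (iv : R * R) => iv.1 - lp i)); rewrite // mem_iota.
Qed.

Lemma grid0 : 0 \in grid.
Proof.
have := @mem_grid_end 0%N (lp 0%N, lp 0%N) k_gt0; rewrite subrr; apply.
by rewrite /Jset eqxx mem_cat mem_seq1 eqxx orbT.
Qed.

Lemma grid_slack : slack \in grid.
Proof.
have km1 : (k.-1 < k)%N by rewrite ltn_predL.
set e := 1 - lplus2 len k v k.-1 k.
have -> : slack = (e, e).1 - lp k.-1 by rewrite /slack /e /lplus2 /=; lra.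
apply: mem_grid_start => //; rewrite prednK // /Jset.
by rewrite gtn_eqF // eqxx mem_cat mem_seq1 eqxx orbT.
Qed.

Lemma grid_inCi i x : x \in grid -> inCi len k v Iv i (x + lp i).
Proof.
rewrite mem_cat => /orP[] /allpairsPdep[j [iv [+ ivJ ->]]]; rewrite mem_iota => jk.
- exists j, k; split=> //; exists iv.2; split; last by rewrite /lplus2; lra.
  by left; exists iv.1, iv.2; rewrite -surjective_pairing.
- exists 0%N, j.+1; split=> //.
  exists (iv.1 - (lminus len k v j.+1 - lp 0%N)); split; last first.
    by rewrite lminus_succ /lplus2; lra.
  by right; exists iv.1, iv.2; rewrite -surjective_pairing.
Qed.

Definition relevel (d : nat -> R) (c x : R) : nat -> R :=
  fun i => if d i == c then x else d i.

Lemma below_chord_reward_relevel a b d c :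
  (forall e, e \in grid -> e <= a \/ b <= e) ->
  below_chord a b (fun x => reward k v Iv (delayed (relevel d c x))).
Proof.
move=> gap; apply: below_chord_sum => i _; rewrite /Rew.
apply: below_chord_sum => iv /Iv_sub_Jset ivJ; apply: below_chord_ilen.
- case: (nat_of_ord i) => [|j]; [exact: affine_on_cst | exact: affine_on_shift].
- rewrite /tat; case: ltnP => _; [exact: affine_on_shift | exact: affine_on_cst].
- case: i ivJ => -[|j] //= jk ivJ; first exact: one_sided_cst.
  by apply: one_sided_shift => _; apply/gap/mem_grid_start.
- rewrite /tat; case: ltnP => ik; last exact: one_sided_cst.
  by apply: one_sided_shift => _; apply/gap/mem_grid_end.
Qed.

Lemma feasible_relevel d a b c x : feasible d -> 0 <= a -> b <= slack ->
  a < c < b -> a <= x <= b ->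
  (forall i, (i < k)%N -> d i != c -> d i <= a \/ b <= d i) ->
  feasible (relevel d c x).
Proof.
move=> [dbound dmono] a_ge0 b_le /andP[ac cb] /andP[ax xb] dside.
rewrite /relevel; split=> [i ik | i j /andP[ij jk]].
  by case: eqP => _; [lra | exact: dbound].
have ik : (i < k)%N by apply: leq_ltn_trans jk.
have dij : d i <= d j by apply: dmono; rewrite ij.
case: eqP => [di|/eqP di]; case: eqP => [dj|/eqP dj] //.
- by case: (dside j jk dj); lra.
- by case: (dside i ik di); lra.
Qed.

Definition offgrid (d : nat -> R) : seq R :=
  undup [seq y <- map d (iota 0 k) | y \notin grid].

Lemma mem_offgrid d i : (i < k)%N -> d i \notin grid -> d i \in offgrid d.
Proof. by move=> ik dig; rewrite mem_undup mem_filter dig map_f // mem_iota. Qed.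

Lemma offgridP d c : c \in offgrid d ->
  c \notin grid /\ exists2 i, (i < k)%N & d i = c.
Proof.
rewrite mem_undup mem_filter => /andP[cg /mapP[i]]; rewrite mem_iota => ik cE.
by split=> //; exists i; rewrite // cE.
Qed.

Lemma size_offgrid_relevel d c x : c \in offgrid d ->
  x \in grid ++ map d (iota 0 k) -> x != c ->
  (size (offgrid (relevel d c x)) < size (offgrid d))%N.
Proof.
move=> cd xS xc.
have sub : {subset c :: offgrid (relevel d c x) <= offgrid d}.
  move=> y; rewrite inE => /predU1P[-> // | /offgridP[yg [i ik yE]]].
  move: yg; rewrite -yE /relevel; case: eqP => _ xg; last exact: mem_offgrid.
  move: xS; rewrite mem_cat (negbTE xg) => /mapP[j]; rewrite mem_iota => jk xE.
  by rewrite xE in xg *; apply: mem_offgrid.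
apply: uniq_leq_size sub; rewrite /= undup_uniq andbT.
apply/negP => /offgridP[_ [i _]]; rewrite /relevel.
by case: eqP => [_ /eqP | //]; rewrite (negbTE xc).
Qed.

Lemma offgrid_gap d c : feasible d -> c \in offgrid d ->
  let S := grid ++ map d (iota 0 k) in exists a b,
  [/\ a \in S, b \in S, 0 <= a < c, c < b <= slack &
    forall y, y \in S -> y != c -> y <= a \/ b <= y].
Proof.
move=> [dbound _] cd S; have [cg [i ik dic]] := offgridP cd.
have /andP[d_ge0 d_le] := dbound i ik.
have gridS e : e \in grid -> e \in S by move=> eg; rewrite mem_cat eg.
have c_neq e : e \in grid -> e != c by move=> eg; apply: contraNneq cg => <-.
have c_gt0 : 0 < c by rewrite lt_neqAle c_neq ?grid0 // -dic d_ge0.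
have c_lt : c < slack by rewrite lt_neqAle eq_sym c_neq ?grid_slack // -dic d_le.
have [a [b [aS bS /andP[ac cb] gap]]] :=
  exists_gap_around (gridS _ grid0) (gridS _ grid_slack) (introT andP (conj c_gt0 c_lt)).
exists a, b; split; rewrite ?ac ?cb ?andbT //.
- by case: (gap 0 (gridS _ grid0) (c_neq _ grid0)); lra.
- by case: (gap slack (gridS _ grid_slack) (c_neq _ grid_slack)); lra.
Qed.

Lemma feasible_improve d c : feasible d -> c \in offgrid d ->
  exists d', [/\ feasible d', (size (offgrid d') < size (offgrid d))%N &
    reward k v Iv (delayed d) <= reward k v Iv (delayed d')].
Proof.
move=> dF cd; have [cg _] := offgridP cd.
have [a [b [aS bS /andP[a_ge0 ac] /andP[cb b_le] gap]]] := offgrid_gap dF cd.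
pose f x := reward k v Iv (delayed (relevel d c x)).
have fc : f c = reward k v Iv (delayed d).
  by rewrite /f /relevel; congr (reward _ _ _ (delayed _)); apply: funext => j; case: eqP.
have : f c <= Num.max (f a) (f b).
  apply: below_chord_le_max; [lra | lra | apply: below_chord_reward_relevel].
  move=> e eg; apply: gap; first by rewrite mem_cat eg.
  by apply: contraNneq cg => <-.
have improve x : x \in grid ++ map d (iota 0 k) -> a <= x <= b -> x != c ->
    f c <= f x -> exists d', [/\ feasible d',
    (size (offgrid d') < size (offgrid d))%N & f c <= reward k v Iv (delayed d')].
  move=> xS xab xc fx; exists (relevel d c x); split=> //.
    apply: (feasible_relevel (a := a) (b := b)); rewrite ?ac //.
    by move=> j jk; apply: gap; rewrite mem_cat map_f ?orbT // mem_iota.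
  exact: size_offgrid_relevel.
rewrite -fc le_max => /orP[fa | fb].
  by apply: (improve a) => //; rewrite ?lexx ?lt_eqF //; lra.
by apply: (improve b) => //; rewrite ?lexx ?gt_eqF //; lra.
Qed.

Lemma feasible_grid_improve d : feasible d -> exists d',
  [/\ feasible d', forall i, (i < k)%N -> d' i \in grid &
    reward k v Iv (delayed d) <= reward k v Iv (delayed d')].
Proof.
have [n] := ubnP (size (offgrid d)); elim: n d => // n IH d size_lt dF.
case E: (offgrid d) => [|c s].
  exists d; split=> // i ik; apply/negPn/negP => /(mem_offgrid ik).
  by rewrite E.
have [|d1 [d1F d1_lt d1_ge]] := feasible_improve dF (_ : c \in offgrid d).
  by rewrite E mem_head.
have [|d2 [d2F d2G d2_ge]] := IH d1 _ d1F; first exact: leq_trans d1_lt _.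
by exists d2; split=> //; apply: le_trans d1_ge d2_ge.
Qed.

Lemma eq_feasible d d' : (forall i, (i < k)%N -> d i = d' i) ->
  feasible d -> feasible d'.
Proof.
move=> dd' [dbound dmono]; split=> [i ik | i j /andP[ij jk]].
  by rewrite -dd' // dbound.
by rewrite -!dd' ?dmono ?ij //; apply: leq_ltn_trans jk.
Qed.

Lemma eq_reward_delayed d d' : (forall i, (i < k)%N -> d i = d' i) ->
  reward k v Iv (delayed d) = reward k v Iv (delayed d').
Proof.
move=> dd'; apply: eq_bigr => -[i ik] _ /=; rewrite /tat /delayed.
congr Rew; first by case: i ik => //= j jk; rewrite dd'.
by case: ifP => // /dd' ->.
Qed.

Definition grid_delays (f : {ffun 'I_k -> seq_sub grid}) : nat -> R :=
  fun i => oapp (fun j => ssval (f j)) 0 (insub i).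

Lemma grid_delaysE f (j : 'I_k) : grid_delays f j = ssval (f j).
Proof. by rewrite /grid_delays valK. Qed.

Lemma exists_grid_delays d : (forall i, (i < k)%N -> d i \in grid) ->
  exists f, forall i, (i < k)%N -> grid_delays f i = d i.
Proof.
move=> dG; exists [ffun j : 'I_k => SeqSub (dG j (ltn_ord j))] => i ik.
by rewrite (grid_delaysE _ (Ordinal ik)) ffunE.
Qed.

Lemma optimal_grid_delays : (exists t, is_timing_profile len k v t) ->
  exists d, optimal_profile len k v Iv (delayed d) /\
    forall i, (i < k)%N -> d i \in grid.
Proof.
have grid_bound t : is_timing_profile len k v t -> exists f,
    feasible (grid_delays f) /\
    reward k v Iv t <= reward k v Iv (delayed (grid_delays f)).
  pose d i := t i - lp i.
  have -> : t = delayed d by apply: funext => i; rewrite /delayed /d subrK.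
  move=> /timing_profile_delayedP /feasible_grid_improve [d' [d'F d'G d'_ge]].
  have [f fE] := exists_grid_delays d'G.
  exists f; split; first by apply: eq_feasible d'F => i /fE.
  by rewrite -(@eq_reward_delayed d' (grid_delays f)) // => i /fE ->.
case=> t0 /grid_bound [f0 [f0F _]].
pose F f := reward k v Iv (delayed (grid_delays f)).
have [f fF f_max] :=
  arg_maxP F (asboolT f0F : (fun f => `[< feasible (grid_delays f) >]) f0).
exists (grid_delays f); split; last first.
  by move=> i ik; rewrite (grid_delaysE _ (Ordinal ik)) ssvalP.
split; first exact/timing_profile_delayedP/asboolP.
by move=> t /grid_bound [g [gF tg]]; apply: le_trans tg (f_max g (asboolT gF)).
Qed.

End GridProfiles.

Theorem theorem1 (R : realType) (V : Type) (E : V -> V -> Prop)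
    (len : V -> V -> R) (Iv : V -> seq (R * R)) (k : nat) (v : nat -> V) :
  (* task-assistance graph *)
  (forall u w : V, E u w -> 0 <= len u w) ->
  (forall u : V, uniq (Iv u)) ->
  (forall (u : V) (I : R * R), I \in Iv u -> 0 <= I.1 /\ I.1 <= I.2 /\ I.2 <= 1) ->
  (* pi = <v_0, ..., v_k> is a path, k >= 1 *)
  (1 <= k)%N ->
  (forall i : nat, (i < k)%N -> E (v i) (v i.+1)) ->
  (exists t : nat -> R, is_timing_profile len k v t) ->
  exists t : nat -> R, optimal_profile len k v Iv t /\
    forall i : nat, (i < k)%N -> inCi len k v Iv i (t i).
Proof.
move=> _ _ _ k_gt0 _ /(optimal_grid_delays Iv k_gt0) [d [d_opt d_grid]].
by exists (delayed len k v d); split=> // i ik; apply/grid_inCi/d_grid.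
Qed.
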